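(* Let $n>2$ be an integer. There exist two distinct $n$-multisets $A\neq B$ of complex numbers with $A^{(2)}=B^{(2)}$ if and only if $n$ is a power of $2$.
   Context: An $n$-multiset is a multiset $A=\{a_1,\dots,a_n\}$ of $n$ numbers, counted with multiplicity. For $1\le s\le n$, the multiset of $s$-sums of $A$, denoted $A^{(s)}$, is the multiset of the $\binom{n}{s}$ numbers $a_{i_1}+\dots+a_{i_s}$ over all index sets $1\le i_1<\dots<i_s\le n$. *)

From HB Require Import structures.
From mathcomp Require Import all_boot all_order all_algebra.
Set Implicit Arguments. Unset Strict Implicit. Unset Printing Implicit Defensive.
Import Order.TTheory GRing.Theory Num.Theory.
Local Open Scope ring_scope.

(* A multiset of numbers is represented by a sequence, up to permutation
   (multiset equality = perm_eq).  [ssums s A] is the multiset A^(s) of all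
   s-sums a_{i_1}+...+a_{i_s} over index sets i_1 < ... < i_s, listed with
   multiplicity: an s-subset of x :: A either contains x (x plus an
   (s-1)-subset of A) or is an s-subset of A. *)
Fixpoint ssums {R : nmodType} (s : nat) (A : seq R) : seq R :=
  match s, A with
  | 0%N, _ => [:: 0]
  | s'.+1, [::] => [::]
  | s'.+1, x :: A' => [seq y + x | y <- ssums s' A'] ++ ssums s A'
  end.

From HB Require Import structures.
From mathcomp Require Import all_boot all_order all_algebra.
From mathcomp Require Import ring zify.
Import Order.TTheory GRing.Theory Num.Theory.
Set Implicit Arguments. Unset Strict Implicit. Unset Printing Implicit Defensive.
Local Open Scope ring_scope.

(* Write p_k(L) for the k-th power sum of L.  Expanding the double sum
   S = sum_(a, b in L) (a + b)^k in two ways gives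
     S = 2 p_k(L^(2)) + 2^k p_k(L) = sum_i C(k, i) p_(k-i)(L) p_i(L),
   and the terms i = 0, k on the right contribute 2 n p_k(L) when |L| = n.
   Hence (2^k - 2n) p_k(L) is determined by p_k(L^(2)) and lower power sums
   of L; if n is not a power of 2, induction shows that L^(2) determines all
   p_k(L), and in characteristic 0 these determine the multiset L.
   Conversely, the pairs A = {0, 2}, B = {1, 1}, doubled by
   (A, B) |-> (A + (B + 1), B + (A + 1)), have equal 2-sums at every stage,
   while 0 lies in A and every element of B is positive. *)

Lemma perm_allpairsC (S T R : eqType) (f : S -> T -> R) (s : seq S) (t : seq T) :
  perm_eq [seq f x y | x <- s, y <- t] [seq f x y | y <- t, x <- s].
Proof.
elim: s => [|x s IHs]; first by rewrite allpairs0r.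
rewrite allpairs_cons perm_sym.
by rewrite (perm_allpairs_consr (fun y x => f x y) t (fun=> x) (fun=> s)) perm_sym perm_cat2l.
Qed.

Section TwoSums.
Variable V : nmodType.
Implicit Types (x e : V) (A B : seq V).

Lemma ssums1 A : ssums 1 A = A.
Proof.
elim: A => //= x A ->; have -> : ssums 0 A = [:: 0] by case: A.
by rewrite /= add0r.
Qed.

Lemma ssums2_cons x A : ssums 2 (x :: A) = [seq y + x | y <- A] ++ ssums 2 A.
Proof. by rewrite /= ssums1. Qed.

Lemma perm_ssums2_cat A B :
  perm_eq (ssums 2 (A ++ B))
          (ssums 2 A ++ ssums 2 B ++ [seq b + a | a <- A, b <- B]).
Proof.
elim: A => [|x A IHA]; first by rewrite cats0.
move/permP: IHA => IHA; apply/permP => p.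
by rewrite cat_cons allpairs_cons !ssums2_cons map_cat !count_cat IHA !count_cat; lia.
Qed.

Lemma ssums2_shift e A :
  ssums 2 [seq x + e | x <- A] = [seq y + (e + e) | y <- ssums 2 A].
Proof.
elim: A => // x A IHA; rewrite map_cons !ssums2_cons IHA map_cat -!map_comp.
by congr (_ ++ _); apply: eq_map => y /=; rewrite addrACA.
Qed.

End TwoSums.

Section Doubling.
Variables (V : nmodType) (e : V).

Fixpoint doubling (j : nat) : seq V * seq V :=
  if j is j'.+1 then
    let: (A, B) := doubling j' in
    (A ++ [seq x + e | x <- B], B ++ [seq x + e | x <- A])
  else ([:: 0; e + e], [:: e; e]).

Lemma size_doubling j :
  size (doubling j).1 = (2 ^ j.+1)%N /\ size (doubling j).2 = (2 ^ j.+1)%N.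
Proof.
elim: j => [|j]; first by [].
rewrite /=; case: (doubling j) => A B /= [sA sB].
by rewrite !size_cat !size_map sA sB (expnS 2 j.+1) mul2n addnn.
Qed.

Lemma perm_ssums2_doubling j :
  perm_eq (ssums 2 (doubling j).1) (ssums 2 (doubling j).2).
Proof.
elim: j => [|j]; first by rewrite /= !add0r addr0.
rewrite /=; case: (doubling j) => A B /= ssAB.
rewrite (permPl (perm_ssums2_cat _ _)) (permPr (perm_ssums2_cat _ _)) !ssums2_shift.
apply: perm_cat (ssAB) (perm_cat _ _); first by rewrite perm_sym perm_map.
rewrite !allpairs_mapr (permPr (perm_allpairsC _ _ _)).
rewrite (eq_allpairs (f2 := fun a b => a + e + b)) // => a b /=.
by rewrite -addrA addrC [e + a]addrC.
Qed.

End Doubling.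

Lemma doubling_not_perm_eq (R : numDomainType) (e : R) j :
  0 < e -> ~~ perm_eq (doubling e j).1 (doubling e j).2.
Proof.
move=> e_gt0.
suff [A0 A_ge0 B_gt0] : [/\ 0 \in (doubling e j).1,
                           all (>= 0) (doubling e j).1 & all (> 0) (doubling e j).2].
  by apply: contraL A0 => /perm_mem ->; apply/negP => /(allP B_gt0); rewrite ltxx.
elim: j => [|j]; first by rewrite /= !inE eqxx lexx e_gt0 addr_ge0 ?ltW.
rewrite /=; case: (doubling e j) => A B /= [A0 A_ge0 B_gt0].
rewrite mem_cat A0 !all_cat A_ge0 B_gt0 !all_map; split=> //.
- by apply/allP => b /(allP B_gt0) b_gt0 /=; rewrite ltW ?addr_gt0.
- by apply/allP => a /(allP A_ge0) a_ge0 /=; rewrite ltr_wpDl.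
Qed.

Section PowerSums.
Variable R : comNzRingType.
Implicit Types (e : R) (L s : seq R).

Definition psum k s := \sum_(x <- s) x ^+ k.

Lemma psum0 s : psum 0 s = (size s)%:R.
Proof. by rewrite /psum (eq_bigr (fun=> 1%:R)) // -natr_sum sum1_size. Qed.

Lemma sum_horner_psum s (q : {poly R}) :
  \sum_(x <- s) q.[x] = \sum_(i < size q) q`_i * psum i s.
Proof.
under eq_bigr do rewrite horner_coef.
by rewrite exchange_big; apply: eq_bigr => i _; rewrite mulr_sumr.
Qed.

Lemma psum_shift k e s :
  psum k [seq x + e | x <- s] = \sum_(i < k.+1) (psum (k - i) s * e ^+ i) *+ 'C(k, i).
Proof.
rewrite /psum big_map; under eq_bigr do rewrite exprDn.
by rewrite exchange_big; apply: eq_bigr => i _; rewrite sumrMnl mulr_suml.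
Qed.

Lemma sum_pairs_binomial k L :
  \sum_(a <- L) \sum_(b <- L) (b + a) ^+ k
    = \sum_(i < k.+1) (psum (k - i) L * psum i L) *+ 'C(k, i).
Proof.
under eq_bigr => a _
  do rewrite -(big_map (+%R^~ a) predT (fun y => y ^+ k)) -/(psum k _) psum_shift.
by rewrite exchange_big; apply: eq_bigr => i _; rewrite sumrMnl -mulr_sumr.
Qed.

Lemma sum_pairs_ssums2 k L :
  \sum_(a <- L) \sum_(b <- L) (b + a) ^+ k
    = 2%:R * psum k (ssums 2 L) + 2%:R ^+ k * psum k L.
Proof.
elim: L => [|x L IHL]; first by rewrite /psum !big_nil !mulr0 addr0.
have xx : (x + x) ^+ k = 2%:R ^+ k * x ^+ k by rewrite -exprMn mulr_natl mulr2n.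
have xa : \sum_(a <- L) (x + a) ^+ k = \sum_(a <- L) (a + x) ^+ k.
  by apply: eq_bigr => a _; rewrite addrC.
under eq_bigr => a _ do rewrite big_cons.
rewrite big_split !big_cons /= IHL xa ssums1 xx /psum big_cat /= big_cons big_map.
ring.
Qed.

Lemma psum_ssums2_rec k L :
  (2%:R ^+ k.+1 - (size L).*2%:R) * psum k.+1 L
    = \sum_(i < k) (psum (k - i) L * psum i.+1 L) *+ 'C(k.+1, i.+1)
      - 2%:R * psum k.+1 (ssums 2 L).
Proof.
have := sum_pairs_binomial k.+1 L.
rewrite sum_pairs_ssums2 big_ord_recl big_ord_recr /= /bump leq0n add1n subn0 subnn.
under eq_bigr => i _ do rewrite leq0n add1n subSS.
rewrite bin0 binn !mulr1n !psum0 => /(canRL (addKr _)) pow_psum.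
rewrite mulrBl pow_psum -mul2n natrM.
ring.
Qed.

End PowerSums.

Section Reconstruction.
Variable R : numDomainType.
Implicit Types s t A B : seq R.

Lemma perm_eq_psumP s t : perm_eq s t <-> forall k, psum k s = psum k t.
Proof.
split=> [st k|eq_psum]; first exact: perm_big.
apply/allP => c _ /=.
(* q vanishes on s ++ t except at c, so summing q over s counts c in s. *)
pose K := \prod_(d <- s ++ t | d != c) (c - d).
pose q := \prod_(d <- s ++ t | d != c) ('X - d%:P).
have K_neq0 : K != 0.
  by rewrite prodf_seq_neq0; apply/allP => d _; apply/implyP; rewrite subr_eq0 eq_sym.
have qE : {in s ++ t, forall x, q.[x] = (x == c)%:R * K}.
  move=> x x_st; rewrite horner_prod.
  have [->|x_neq_c] := eqVneq x c.
    by rewrite mul1r; apply: eq_bigr => d _; rewrite hornerXsubC.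
  rewrite mul0r; apply/eqP; rewrite prodf_seq_eq0; apply/hasP; exists x => //.
  by rewrite x_neq_c hornerXsubC subrr eqxx.
have sum_q u : {subset u <= s ++ t} -> \sum_(x <- u) q.[x] = (count_mem c u)%:R * K.
  move=> u_st; rewrite (eq_big_seq _ (fun x xu => qE x (u_st x xu))) -mulr_suml.
  by rewrite -natr_sum -sum1_count [in RHS]big_mkcond.
have sub_s : {subset s <= s ++ t} by move=> x xs; rewrite mem_cat xs.
have sub_t : {subset t <= s ++ t} by move=> x xt; rewrite mem_cat xt orbT.
have : (count_mem c s)%:R * K = (count_mem c t)%:R * K.
  rewrite -(sum_q _ sub_s) -(sum_q _ sub_t) !sum_horner_psum.
  by apply: eq_bigr => i _; rewrite eq_psum.
by move/(mulIf K_neq0)/eqP; rewrite eqr_nat.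
Qed.

Lemma eq_psum_ssums2 A B :
  size A = size B -> (forall k, size A != 2 ^ k)%N ->
  (forall k, psum k (ssums 2 A) = psum k (ssums 2 B)) ->
  forall k, psum k A = psum k B.
Proof.
move=> sAB npow2 eq_ss; elim/ltn_ind => -[_|k IHk]; first by rewrite !psum0 sAB.
have c_neq0 : 2%:R ^+ k.+1 - (size A).*2%:R != 0 :> R.
  by rewrite subr_eq0 -natrX eqr_nat -muln2 expnSr eqn_pmul2r // eq_sym npow2.
apply: (mulfI c_neq0); rewrite [in RHS]sAB !psum_ssums2_rec eq_ss.
congr (_ - _); apply: eq_bigr => i _.
by rewrite !IHk ?ltnS ?leq_subr ?(ltn_ord i).
Qed.

End Reconstruction.

Theorem mainTheorem1 (C : numClosedFieldType) (n : nat) (hn : (2 < n)%N) :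
  (exists A B : seq C,
      [/\ size A = n, size B = n, ~~ perm_eq A B &
          perm_eq (ssums 2 A) (ssums 2 B)])
  <-> (exists k : nat, n = (2 ^ k)%N).
Proof.
split=> [[A [B [sizeA sizeB nAB ssAB]]] | [[|j] n_pow2]].
- have [n_pow2 | n_npow2] := eqVneq n (2 ^ trunc_log 2 n)%N.
    by exists (trunc_log 2 n).
  case/negP: nAB; apply/perm_eq_psumP/eq_psum_ssums2; first by rewrite sizeA sizeB.
    by move=> k; rewrite sizeA; apply: contra n_npow2 => /eqP ->; rewrite trunc_expnK.
  exact/perm_eq_psumP.
- by rewrite n_pow2 in hn.
- have [sizeA sizeB] := size_doubling (1 : C) j.
  exists (doubling 1 j).1, (doubling 1 j).2; rewrite n_pow2.
  split=> //; [exact: doubling_not_perm_eq ltr01 | exact: perm_ssums2_doubling].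
Qed.
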